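(* Let $\gamma>0$ and let $H$ be a $3$-graph of order $n$ with $\delta_2(H)\ge(1/2-\gamma)n$. Suppose $X,Y$ is a bipartition of $V(H)$ and $\{x,x',y,y'\}$ spans a copy of $K_4^3$ in $H$ with $x,x'\in X$ and $y,y'\in Y$. Then at least one of the following holds: (a) $\{x,x',y,y'\}$ is contained in at least $\gamma n/4$ $5$-sets that span $(X,Y)$-bridges of length $1$; (b) $(1/2-4\gamma)n\le|X|,|Y|\le(1/2+4\gamma)n$ and $xx'y$ is $(9\gamma,X,Y)$-typical.
   Context: $\delta_2(H)$ is the minimum over pairs of distinct vertices of the number of edges containing the pair. $K_4^3$ is the complete $3$-graph on $4$ vertices; $K_4^-$ is the $3$-graph with $4$ vertices and $3$ edges. A set $S$ is an $(x,y)$-connector of length $1$ if $S\cap\{x,y\}=\emptyset$, $|S|=3$, and both $S\cup\{x\}$ and $S\cup\{y\}$ span copies of $K_4^-$ in $H$. A triple $(x_0,y_0,S)$ is an $(X,Y)$-bridge of length $1$ if $x_0\in X$, $y_0\in Y$ and $S$ is an $(x_0,y_0)$-connector of length $1$; a $5$-set $Z$ spans an $(X,Y)$-bridge of length $1$ if $Z=S\cup\{x_0,y_0\}$ for some such bridge. Write $N(uv)$ for the set of vertices $w$ with $uvw\in E(H)$, $N(uv,Z)=N(uv)\cap Z$ and $\deg(uv,Z)=|N(uv,Z)|$. For $\rho>0$, a triple $xx'y$ with $x,x'\in X$, $y\in Y$ is $(\rho,X,Y)$-typical if (T1) $\deg(xx',Y)\ge|Y|-\rho n$, (T2) $|N(xy,X)\cap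 N(x'y,X)|\le\rho n$, and (T3) $|X|-\rho n\le\deg(xy,X)+\deg(x'y,X)$. *)

From HB Require Import structures.
From mathcomp Require Import all_boot all_order all_algebra.
Set Implicit Arguments. Unset Strict Implicit. Unset Printing Implicit Defensive.
Import Order.TTheory GRing.Theory Num.Theory.

Section Hyper.
Variable V : finType.
Implicit Types (H : {set {set V}}) (X Y Z S T : {set V}) (u v x y : V).

Definition is_3graph H : bool := [forall e in H, #|e| == 3].

Definition nbr H u v : {set V} := [set w | [set u; v; w] \in H].
Definition degZ H u v Z : nat := #|nbr H u v :&: Z|.

Definition edges_in H T : nat := #|[set e in H | e \subset T]|.

Definition spans_K4 H T : bool :=
  (#|T| == 4) && [forall e : {set V}, ((e \subset T) && (#|e| == 3)) ==> (e \in H)].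

Definition spans_K4minus H T : bool := (#|T| == 4) && (3 <= edges_in H T).

Definition connector1 H x y S : bool :=
  [&& [disjoint S & [set x; y]], #|S| == 3,
      spans_K4minus H (x |: S) & spans_K4minus H (y |: S)].

Definition spans_bridge1 H X Y Z : bool :=
  [exists x0 in X, exists y0 in Y, exists S : {set V},
     connector1 H x0 y0 S && (Z == S :|: [set x0; y0])].

End Hyper.

Local Open Scope ring_scope.
Definition typical (R : realFieldType) (V : finType) (H : {set {set V}})
    (rho : R) (X Y : {set V}) (x x' y : V) : Prop :=
  let n : R := (#|V|%N)%:R in
  [/\ (#|Y|%:R - rho * n <= (degZ H x x' Y)%:R)%R,
      ((#|nbr H x y :&: X :&: (nbr H x' y :&: X)|)%:R <= rho * n)%R &
      (#|X|%:R - rho * n <= (degZ H x y X + degZ H x' y X)%:R)%R].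

From HB Require Import structures.
From mathcomp Require Import all_boot all_order all_algebra.
From mathcomp Require Import lra.
Import Order.TTheory GRing.Theory Num.Theory.
Set Implicit Arguments. Unset Strict Implicit. Unset Printing Implicit Defensive.

(* Write T = {x, x', y, y'}.  If w is in X and lies in two of N(xx'), N(xy), N(x'y), then
   S = {x, x', y} is a (w, y')-connector: S + y' spans K_4^3 and S + w spans K_4^-, so
   T + w spans an (X, Y)-bridge.  The same holds with y and y' exchanged, and symmetrically
   for w in Y.  Hence, unless there are at least gamma n / 4 such bridges, almost every
   vertex lies in few of the neighbourhoods of the six pairs of T, while each of them has
   size at least (1/2 - gamma) n.  Summing suitable weighted per-vertex inequalities over
   all vertices and inserting the codegree bound gives the bounds on |X| and |Y| and the
   three conditions of typicality. *)

Section FinsetFacts.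
Variable T : finType.
Implicit Types (A S : {set T}) (a b c d : T).

Lemma card_set3 a b c : a != b -> a != c -> b != c -> #|[set a; b; c]| = 3.
Proof.
move=> ab ac bc; rewrite setUC cardsU1 cards2 ab !inE.
by rewrite !(eq_sym c) (negbTE ac) (negbTE bc).
Qed.

Lemma uniq_of_card_set4 a b c d : #|[set a; b; c; d]| = 4 -> uniq [:: a; b; c; d].
Proof.
move=> card4; apply/card_uniqP; rewrite [size _]/= -card4; apply: eq_card => z.
by rewrite !inE !orbA.
Qed.

Lemma sum_mem_card A : (\sum_(t : T) (t \in A : nat))%N = #|A|.
Proof. by rewrite -sum1_card [RHS]big_mkcond; apply: eq_bigr => t _; case: (t \in A). Qed.

Lemma card_setU1_le (P : pred {set T}) S :
  (#|[set t | (t \notin S) && P (t |: S)]| <= #|[set Z : {set T} | (S \subset Z) && P Z]|)%N.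
Proof.
rewrite -(@card_in_imset _ _ (fun t => t |: S)); last first.
  move=> t1 t2; rewrite !inE => /andP[t1S _] /andP[t2S _] eqS.
  by move: (setU11 t1 S); rewrite eqS in_setU1 (negbTE t1S) orbF => /eqP.
apply/subset_leq_card/subsetP => _ /imsetP[t + ->].
by rewrite !inE subsetUr => /andP[].
Qed.

End FinsetFacts.

Section Neighbourhoods.
Variables (V : finType) (H : {set {set V}}).
Implicit Types (T U : {set V}) (p q r u v w : V).

Lemma nbrE u v w : (w \in nbr H u v) = ([set u; v; w] \in H).
Proof. by rewrite inE. Qed.

Lemma nbr_notin_l u v : is_3graph H -> u \notin nbr H u v.
Proof.
move=> /forallP/(_ [set u; v; u]); rewrite nbrE; apply: contraL => ->.
by rewrite setUC cardsU1 !inE eqxx cards2; case: (u != v).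
Qed.

Lemma nbr_notin_r u v : is_3graph H -> v \notin nbr H u v.
Proof.
move=> /forallP/(_ [set u; v; v]); rewrite nbrE; apply: contraL => ->.
by rewrite setUC cardsU1 !inE eqxx orbT cards2; case: (u != v).
Qed.

Lemma spans_K4_nbr T u v w :
  spans_K4 H T -> u \in T -> v \in T -> w \in T -> uniq [:: u; v; w] ->
  w \in nbr H u v.
Proof.
move=> /andP[_ /forallP K] uT vT wT; rewrite nbrE /= !inE !negb_or andbT.
move=> /andP[/andP[uv uw] vw].
apply: (implyP (K _)); rewrite card_set3 // eqxx andbT.
by rewrite !subUset !sub1set uT vT wT.
Qed.

Lemma spans_K4_uniq a b c d : spans_K4 H [set a; b; c; d] -> uniq [:: a; b; c; d].
Proof. by case/andP => /eqP /uniq_of_card_set4. Qed.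

Lemma edges_in_count U (s : seq {set V}) :
  uniq s -> all (fun e : {set V} => e \subset U) s -> (count (mem H) s <= edges_in H U)%N.
Proof.
move=> uniq_s sub_s; rewrite -size_filter /edges_in.
rewrite -(card_uniqP (filter_uniq _ uniq_s)); apply/subset_leq_card/subsetP => e.
rewrite mem_filter inE => /andP[eH es]; rewrite inE eH; exact: (allP sub_s).
Qed.

Lemma spans_K4minus_setU1 p q r w :
  uniq [:: w; p; q; r] -> [set p; q; r] \in H ->
  (2 <= (w \in nbr H p q) + (w \in nbr H p r) + (w \in nbr H q r))%N ->
  spans_K4minus H (w |: [set p; q; r]).
Proof.
move=> uniq_wpqr pqrH two; move: (uniq_wpqr).
rewrite /= !inE !negb_or => /and4P[/and3P[wp wq wr] /andP[pq pr] qr _].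
apply/andP; split; first by rewrite cardsU1 card_set3 // !inE !negb_or wp wq wr.
pose triples := [:: [set p; q; r]; [set p; q; w]; [set p; r; w]; [set q; r; w]].
have uniq_triples : uniq triples.
  have neq (A B : {set V}) z : z \in A -> z \notin B -> A != B.
    by move=> zA; apply: contra => /eqP <-.
  have notin3 z a b c : z != a -> z != b -> z != c -> z \notin [set a; b; c].
    by move=> za zb zc; rewrite !inE !negb_or za zb zc.
  rewrite /= !inE !negb_or !andbT; do ![apply/andP; split];
    first [ by apply: (neq _ _ r); [rewrite !inE eqxx ?orbT | apply: notin3; rewrite // eq_sym]
          | by apply: (neq _ _ q); [rewrite !inE eqxx ?orbT | apply: notin3; rewrite // eq_sym]
          | by apply: (neq _ _ p); [rewrite !inE eqxx ?orbT | apply: notin3; rewrite // eq_sym] ].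
have sub_triples : all (fun e : {set V} => e \subset w |: [set p; q; r]) triples.
  by rewrite /= !subUset !sub1set !inE !eqxx !orbT.
apply: leq_trans (edges_in_count uniq_triples sub_triples).
by move: pqrH; rewrite /= -!nbrE => ->; rewrite addn0 add1n ltnS !addnA.
Qed.

End Neighbourhoods.

Section Bridges.
Variables (V : finType) (H : {set {set V}}) (X Y : {set V}).
Implicit Types (S : {set V}) (p q r a w : V).

Lemma connector1C u v S : connector1 H u v S = connector1 H v u S.
Proof.
rewrite /connector1 [[set u; v]]setUC.
by case: (spans_K4minus H (u |: S)); case: (spans_K4minus H (v |: S)); rewrite ?andbF ?andbT.
Qed.

Lemma spans_bridge1_setU u v S :
  u \in X -> v \in Y -> connector1 H u v S -> spans_bridge1 H X Y (S :|: [set u; v]).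
Proof.
move=> uX vY conn; apply/existsP; exists u; rewrite uX; apply/existsP; exists v.
by rewrite vY; apply/existsP; exists S; rewrite conn eqxx.
Qed.

Lemma connector1_K4_extension p q r a w :
  spans_K4 H [set p; q; r; a] -> w \notin [set p; q; r; a] ->
  (2 <= (w \in nbr H p q) + (w \in nbr H p r) + (w \in nbr H q r))%N ->
  connector1 H a w [set p; q; r].
Proof.
move=> K wT two; move: (spans_K4_uniq K) wT; rewrite /= !inE !negb_or => /and4P[/and3P[pq pr pa] /andP[qr qa] ra _].
move=> /andP[/andP[/andP[wp wq] wr] wa].
have a_nbr : [/\ a \in nbr H p q, a \in nbr H p r & a \in nbr H q r].
  by split; apply: (spans_K4_nbr K); rewrite /= !inE ?eqxx ?orbT ?negb_or ?pq ?pr ?qr ?pa ?qa ?ra.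
have pqrH : [set p; q; r] \in H.
  by rewrite -nbrE; apply: (spans_K4_nbr K); rewrite /= !inE ?eqxx ?orbT ?negb_or ?pq ?pr ?qr.
case: a_nbr => apq apr aqr.
rewrite /connector1 card_set3 // eqxx /=; apply/and3P; split.
- rewrite disjoints_subset !subUset !sub1set !inE !negb_or.
  by rewrite pa qa ra !(eq_sym _ w) wp wq wr.
- by apply: spans_K4minus_setU1; rewrite ?apq ?apr ?aqr //= !inE !negb_or pq pr qr !(eq_sym a) pa qa ra.
- by apply: spans_K4minus_setU1; rewrite //= !inE !negb_or pq pr qr wp wq wr.
Qed.

Lemma spans_bridge1_K4_extension p q r a w :
  spans_K4 H [set p; q; r; a] -> w \notin [set p; q; r; a] ->
  (w \in X) && (a \in Y) || (a \in X) && (w \in Y) ->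
  (2 <= (w \in nbr H p q) + (w \in nbr H p r) + (w \in nbr H q r))%N ->
  spans_bridge1 H X Y (w |: [set p; q; r; a]).
Proof.
move=> K wT sides two; have conn := connector1_K4_extension K wT two.
have -> : w |: [set p; q; r; a] = [set p; q; r] :|: [set a; w].
  by apply/setP => z; rewrite !inE; case: (z == w); rewrite ?orbT ?orbF.
case/orP: sides => /andP[inX inY].
- by rewrite [[set a; w]]setUC; apply: spans_bridge1_setU; rewrite // connector1C.
- exact: spans_bridge1_setU.
Qed.

End Bridges.

Section Profile.
Variables (V : finType) (H : {set {set V}}) (X Y : {set V}) (x x' y y' : V).
Hypotheses (H3 : is_3graph H) (XY_disj : X :&: Y = set0) (XY_cover : X :|: Y = [set: V]).
Hypotheses (xX : x \in X) (x'X : x' \in X) (yY : y \in Y) (y'Y : y' \in Y).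
Hypothesis K : spans_K4 H [set x; x'; y; y'].

Let T := [set x; x'; y; y'].
Let bridge_vertices := [set w | (w \notin T) && spans_bridge1 H X Y (w |: T)].

Lemma card_partition : (#|X| + #|Y|)%N = #|V|.
Proof. by rewrite -cardsUI XY_cover XY_disj cards0 addn0 cardsT. Qed.

Lemma inY_notinX w : (w \in Y) = (w \notin X).
Proof.
apply/idP/idP => [wY | wX].
- by apply/negP => wX; move: (in_set0 w); rewrite -XY_disj inE wX wY.
- by move: (in_setT w); rewrite -XY_cover inE (negbTE wX).
Qed.

Lemma card_bridge_vertices :
  (#|bridge_vertices| <= #|[set Z : {set V} | (T \subset Z) && spans_bridge1 H X Y Z]|)%N.
Proof. exact: card_setU1_le. Qed.

Lemma vertex_profile w :
  [|| w \in bridge_vertices,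
      [&& w \in X, (w \in nbr H x x') + (w \in nbr H x y) + (w \in nbr H x' y) <= 1
                 & (w \in nbr H x x') + (w \in nbr H x y') + (w \in nbr H x' y') <= 1]%N
    | [&& w \in Y, (w \in nbr H x y) + (w \in nbr H x y') + (w \in nbr H y y') <= 1
                 & (w \in nbr H x' y) + (w \in nbr H x' y') + (w \in nbr H y y') <= 1]%N].
Proof.
have [wT | wT] := boolP (w \in T).
  rewrite !inE in wT; case/orP: wT => [/orP[/orP[]|]|] /eqP->;
  rewrite ?xX ?x'X ?yY ?y'Y ?(negbTE (nbr_notin_l _ _ H3)) ?(negbTE (nbr_notin_r _ _ H3));
  by rewrite ?add0n ?addn0 ?leq_b1 ?orbT.
have bridging p q r a : [set p; q; r; a] = T -> (w \in X) && (a \in Y) || (a \in X) && (w \in Y) ->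
    (1 < (w \in nbr H p q) + (w \in nbr H p r) + (w \in nbr H q r))%N -> w \in bridge_vertices.
  move=> eT sides two; rewrite inE wT -eT; apply: spans_bridge1_K4_extension; rewrite ?eT //.
have [wX | wNX] := boolP (w \in X).
- have [le1 | gt1] := leqP ((w \in nbr H x x') + (w \in nbr H x y) + (w \in nbr H x' y)) 1;
    last by apply/orP; left; apply: (bridging x x' y y'); rewrite ?wX ?y'Y.
  have [le2 | gt2] := leqP ((w \in nbr H x x') + (w \in nbr H x y') + (w \in nbr H x' y')) 1.
    by rewrite orbT.
  apply/orP; left; apply: (bridging x x' y' y); rewrite ?wX ?yY //.
  by apply/setP => z; rewrite !inE; case: (z == y); rewrite ?orbT ?orbF.
- have wY : w \in Y by rewrite inY_notinX.
  have [le1 | gt1] := leqP ((w \in nbr H x y) + (w \in nbr H x y') + (w \in nbr H y y')) 1; last first.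
    apply/orP; left; apply: (bridging x y y' x'); rewrite ?x'X ?wY ?orbT //.
    by apply/setP => z; rewrite !inE; case: (z == x'); rewrite ?orbT ?orbF.
  have [le2 | gt2] := leqP ((w \in nbr H x' y) + (w \in nbr H x' y') + (w \in nbr H y y')) 1.
    by rewrite wY !orbT.
  apply/orP; left; apply: (bridging x' y y' x); rewrite ?xX ?wY ?orbT //.
  by apply/setP => z; rewrite !inE; case: (z == x); rewrite ?orbT ?orbF.
Qed.

(* The weights are chosen so that, once summed over all vertices, the codegree bound turns
   them into the bounds on |Y|, |X| and conditions (T1), (T2), (T3) respectively. *)
Lemma vertex_weights w :
  let d := ((w \in nbr H x y) + (w \in nbr H x' y) + (w \in nbr H x y') + (w \in nbr H x' y'))%N in
  let e := ((w \in nbr H x x') + (w \in nbr H y y') + d)%N in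
  [/\ 2 * (w \in nbr H x x') + d <= 2 + 2 * (w \in Y) + 4 * (w \in bridge_vertices),
      2 * (w \in nbr H y y') + d <= 2 + 2 * (w \in X) + 4 * (w \in bridge_vertices),
      (w \in Y) + e <= (w \in nbr H x x' :&: Y) + 3 + 4 * (w \in bridge_vertices),
      (w \in nbr H x y :&: X :&: (nbr H x' y :&: X)) + e <= 3 + 4 * (w \in bridge_vertices)
    & (w \in X) + e <= (w \in nbr H x y :&: X) + (w \in nbr H x' y :&: X) + 3
                        + 4 * (w \in bridge_vertices)]%N.
Proof.
move: (vertex_profile w); rewrite /= !in_setI inY_notinX.
move: (w \in bridge_vertices) (w \in X) (w \in nbr H x x') (w \in nbr H y y').
move: (w \in nbr H x y) (w \in nbr H x' y) (w \in nbr H x y') (w \in nbr H x' y').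
by do 8!case.
Qed.

Lemma weighted_counts :
  let D := (#|nbr H x y| + #|nbr H x' y| + #|nbr H x y'| + #|nbr H x' y'|)%N in
  let E := (#|nbr H x x'| + #|nbr H y y'| + D)%N in
  let g := #|bridge_vertices| in
  [/\ 2 * #|nbr H x x'| + D <= 2 * #|V| + 2 * #|Y| + 4 * g,
      2 * #|nbr H y y'| + D <= 2 * #|V| + 2 * #|X| + 4 * g,
      #|Y| + E <= #|nbr H x x' :&: Y| + 3 * #|V| + 4 * g,
      #|nbr H x y :&: X :&: (nbr H x' y :&: X)| + E <= 3 * #|V| + 4 * g
    & #|X| + E <= #|nbr H x y :&: X| + #|nbr H x' y :&: X| + 3 * #|V| + 4 * g]%N.
Proof.
rewrite /= -cardsT -!sum_mem_card !big_distrr -!big_split /=.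
by split; apply: leq_sum => w _; case: (vertex_weights w); rewrite in_setT.
Qed.

End Profile.

Local Open Scope ring_scope.

Theorem lemma5p10 (R : realFieldType) (V : finType) (gamma : R)
    (H : {set {set V}}) (X Y : {set V}) (x x' y y' : V) :
  (0 < gamma)%R ->
  is_3graph H ->
  (forall u v : V, u != v ->
     ((1 / 2 - gamma) * (#|V|)%:R <= (#|nbr H u v|)%:R)%R) ->
  X :&: Y = set0 -> X :|: Y = [set: V] ->
  x \in X -> x' \in X -> y \in Y -> y' \in Y ->
  spans_K4 H [set x; x'; y; y'] ->
  (gamma * (#|V|)%:R / 4%:R <=
     (#|[set Z : {set V} | ([set x; x'; y; y'] \subset Z) && spans_bridge1 H X Y Z]|)%:R)%R
  \/
  ([/\ ((1 / 2 - 4%:R * gamma) * (#|V|)%:R <= (#|X|)%:R)%R,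
       ((#|X|)%:R <= (1 / 2 + 4%:R * gamma) * (#|V|)%:R)%R,
       ((1 / 2 - 4%:R * gamma) * (#|V|)%:R <= (#|Y|)%:R)%R,
       ((#|Y|)%:R <= (1 / 2 + 4%:R * gamma) * (#|V|)%:R)%R &
       typical H (9%:R * gamma) X Y x x' y]).
Proof.
move=> gamma_gt0 H3 codeg XY_disj XY_cover xX x'X yY y'Y K.
have [few_bridges | many_bridges] := ltP _ (gamma * #|V|%:R / 4%:R); last by left.
right.
have bridges := card_bridge_vertices H X Y x x' y y'.
have cardXY := card_partition XY_disj XY_cover.
have [cA cB cNA cN12 cX] := weighted_counts H3 XY_disj XY_cover xX x'X yY y'Y K.
move: bridges cardXY cA cB cNA cN12 cX => /=.
rewrite -!(ler_nat R) => + /(congr1 (fun n => n%:R : R)); rewrite !natrD.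
move=> bridges cardXY cA cB cNA cN12 cX.
move: (spans_K4_uniq K); rewrite /= !inE !negb_or.
move=> /and4P[/and3P[xx' xy xy'] /andP[x'y x'y'] yy' _].
have d_xx' := codeg _ _ xx'; have d_yy' := codeg _ _ yy'; have d_xy := codeg _ _ xy.
have d_x'y := codeg _ _ x'y; have d_xy' := codeg _ _ xy'; have d_x'y' := codeg _ _ x'y'.
rewrite /typical /degZ /= natrD.
split; [lra | lra | lra | lra | split; lra].
Qed.
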